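(* Let $(M,\varphi,\xi,\eta,g)$ be a $5$-dimensional almost contact B-metric manifold with a natural connection $D$ whose curvature tensor $K$ is of $\varphi$-Kähler type. Then $$K=\nu L_1+\nu^* L_2,$$ where, at each point $p$, $\nu=\nu(p)(K)$ and $\nu^*=\nu^*(p)(K)=\nu(p)(K^* )$ are the sectional curvatures with respect to $K$ of the non-degenerate totally real $2$-planes in $T_pM$ orthogonal to $\xi$, i.e. for every such $2$-plane $\alpha$, $k(\alpha;p)(K)=\nu(p)$ and $k^*(\alpha;p)(K)=\nu^*(p)$. In particular, $M$ has point-wise constant sectional curvatures of the totally real $2$-planes orthogonal to $\xi$ with respect to $K$.
   Context: An almost contact B-metric manifold $(M,\varphi,\xi,\eta,g)$ is a $(2n+1)$-dimensional manifold with a $(1,1)$-tensor $\varphi$, a vector field $\xi$, a $1$-form $\eta$ and a pseudo-Riemannian metric $g$ of signature $(n,n+1)$ such that $\varphi\xi=0$, $\varphi^2=-\mathrm{Id}+\eta\otimes\xi$, $\eta\circ\varphi=0$, $\eta(\xi)=1$, and $g(x,y)=-g(\varphi x,\varphi y)+\eta(x)\eta(y)$. A natural connection is a linear connection $D$ with $D\varphi=D\xi=D\eta=Dg=0$; its curvature is $K(x,y)=[D_x,D_y]-D_{[x,y]}$ and $K(x,y,z,w)=g(K(x,y)z,w)$. A $(0,4)$-tensor $L$ is curvature-like if $L(x,y,z,w)=-L(y,x,z,w)=-L(x,y,w,z)$ and $L(x,y,z,w)+L(y,z,x,w)+L(z,x,y,w)=0$; it is of $\varphi$-Kähler type if additionally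 $L(x,y,\varphi z,\varphi w)=-L(x,y,z,w)$. Associated tensor: $L^*(x,y,z,w)=L(x,y,z,\varphi w)$. Define $\pi_1(x,y,z,w)=g(y,z)g(x,w)-g(x,z)g(y,w)$, $\pi_2(x,y,z,w)=g(y,\varphi z)g(x,\varphi w)-g(x,\varphi z)g(y,\varphi w)$, $\pi_3(x,y,z,w)=-g(y,z)g(x,\varphi w)-g(y,\varphi z)g(x,w)+g(x,z)g(y,\varphi w)+g(x,\varphi z)g(y,w)$, $\pi_4(x,y,z,w)=\eta(y)\eta(z)g(x,w)+\eta(x)\eta(w)g(y,z)-\eta(x)\eta(z)g(y,w)-\eta(y)\eta(w)g(x,z)$, $\pi_5(x,y,z,w)=\eta(y)\eta(z)g(x,\varphi w)+\eta(x)\eta(w)g(y,\varphi z)-\eta(x)\eta(z)g(y,\varphi w)-\eta(y)\eta(w)g(x,\varphi z)$, $L_1=\pi_1-\pi_2-\pi_4$, $L_2=\pi_3+\pi_5$. A $2$-plane $\alpha\subset T_pM$ is non-degenerate if $g|_\alpha$ is non-degenerate, totally real if $\alpha\perp\varphi\alpha$, orthogonal to $\xi$ if $\alpha\perp\xi$. For a basis $\{x,y\}$ of such $\alpha$: $k(\alpha;p)(K)=K(x,y,y,x)/\pi_1(x,y,y,x)$, $k^*(\alpha;p)(K)=K(x,y,y,\varphi x)/\pi_1(x,y,y,x)$. *)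

From HB Require Import structures.
From mathcomp Require Import all_boot all_order all_algebra.
From mathcomp Require Import reals.
Set Implicit Arguments. Unset Strict Implicit. Unset Printing Implicit Defensive.
Import Order.TTheory GRing.Theory Num.Theory.
Local Open Scope ring_scope.

(* Model of a tangent space of a 5-dimensional manifold (2n+1, n = 2). *)
Notation vec R := 'cV[R]_5.

Definition bil {R : realType} (G : 'M[R]_5) (x y : vec R) : R :=
  (x^T *m G *m y) 0 0.

Definition form {R : realType} (e : 'rV[R]_5) (x : vec R) : R := (e *m x) 0 0.

(* (phi, xi, eta, g) is an almost contact B-metric structure on R^5:
   phi = F, xi, eta = e, g = G ; g symmetric of signature (n, n+1) = (2, 3). *)
Definition acBmetric {R : realType} (F : 'M[R]_5) (xi : vec R)
  (e : 'rV[R]_5) (G : 'M[R]_5) : Prop :=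
  [/\ F *m xi = 0,
      F *m F = - 1%:M + xi *m e,
      e *m F = 0
    & form e xi = 1] /\
  [/\ G^T = G,
      (exists2 P : 'M[R]_5, P \in unitmx &
         P^T *m G *m P = diag_mx (\row_(i < 5) (if (i < 2)%N then -1 else 1)))
    & forall x y, bil G x y = - bil G (F *m x) (F *m y) + form e x * form e y].

Definition tensor4 (R : realType) := vec R -> vec R -> vec R -> vec R -> R.

Definition multilinear4 {R : realType} (K : tensor4 R) : Prop :=
  [/\ (forall a x x' y z w, K (a *: x + x') y z w = a * K x y z w + K x' y z w),
      (forall a x y y' z w, K x (a *: y + y') z w = a * K x y z w + K x y' z w),
      (forall a x y z z' w, K x y (a *: z + z') w = a * K x y z w + K x y z' w)
    & (forall a x y z w w', K x y z (a *: w + w') = a * K x y z w + K x y z w')].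

Definition curvature_like {R : realType} (L : tensor4 R) : Prop :=
  [/\ (forall x y z w, L x y z w = - L y x z w),
      (forall x y z w, L x y z w = - L x y w z)
    & (forall x y z w, L x y z w + L y z x w + L z x y w = 0)].

Definition phi_Kaehler_type {R : realType} (F : 'M[R]_5) (L : tensor4 R) : Prop :=
  curvature_like L /\
  (forall x y z w, L x y (F *m z) (F *m w) = - L x y z w).

Section Pis.
Context {R : realType} (F : 'M[R]_5) (xi : vec R) (e : 'rV[R]_5) (G : 'M[R]_5).
Local Notation g := (bil G).
Local Notation eta := (form e).

Definition pi1 : tensor4 R := fun x y z w =>
  g y z * g x w - g x z * g y w.
Definition pi2 : tensor4 R := fun x y z w =>
  g y (F *m z) * g x (F *m w) - g x (F *m z) * g y (F *m w).
Definition pi3 : tensor4 R := fun x y z w =>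
  - g y z * g x (F *m w) - g y (F *m z) * g x w
  + g x z * g y (F *m w) + g x (F *m z) * g y w.
Definition pi4 : tensor4 R := fun x y z w =>
  eta y * eta z * g x w + eta x * eta w * g y z
  - eta x * eta z * g y w - eta y * eta w * g x z.
Definition pi5 : tensor4 R := fun x y z w =>
  eta y * eta z * g x (F *m w) + eta x * eta w * g y (F *m z)
  - eta x * eta z * g y (F *m w) - eta y * eta w * g x (F *m z).

Definition L1 : tensor4 R := fun x y z w => pi1 x y z w - pi2 x y z w - pi4 x y z w.
Definition L2 : tensor4 R := fun x y z w => pi3 x y z w + pi5 x y z w.

Definition nondegenerate_plane (a : {vspace vec R}) : Prop :=
  forall u, u \in a -> (forall v, v \in a -> g u v = 0) -> u = 0.
Definition totally_real_plane (a : {vspace vec R}) : Prop :=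
  forall u v, u \in a -> v \in a -> g u (F *m v) = 0.
Definition orth_xi_plane (a : {vspace vec R}) : Prop :=
  forall u, u \in a -> g u xi = 0.

(* sectional curvatures k(alpha)(K) and k*(alpha)(K) computed in a basis {x,y} *)
Definition sec_k (K : tensor4 R) (x y : vec R) : R := K x y y x / pi1 x y y x.
Definition sec_kstar (K : tensor4 R) (x y : vec R) : R :=
  K x y y (F *m x) / pi1 x y y x.
End Pis.

(* At a point everything is linear algebra in T_pM = R^5. A phi-Kaehler
   tensor T kills xi and, in each pair of arguments, is an alternating form
   commuting with phi. If p, q are orthogonal, non-null, totally real and
   orthogonal to xi, then p, phi p, q, phi q, xi is a basis, and such a T is
   determined by the two numbers T(p,q,q,p) and T(p,q,q,phi p). L1 and L2 are
   phi-Kaehler, and on any totally real pair x, y orthogonal to xi the pairs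
   (L(x,y,y,x), L(x,y,y,phi x)) are (pi1, 0) and (0, pi1); hence
   K = nu L1 + nu* L2 and the sectional curvatures are read off. Such p, q exist because
   g is nondegenerate: a non-null u orthogonal to xi becomes totally real
   after a suitable rotation u + b phi u inside span{u, phi u}. *)

From Pilot Require Import Defs.
From HB Require Import structures.
From mathcomp Require Import all_boot all_order all_algebra.
From mathcomp Require Import reals.
From mathcomp Require Import ring lra zify.
Import Order.TTheory GRing.Theory Num.Theory.
Local Open Scope ring_scope.
Set Implicit Arguments. Unset Strict Implicit.

Lemma linear_0DZ (K : fieldType) (V : lmodType K) (f : V -> K) :
  (forall a u v, f (a *: u + v) = a * f u + f v) ->
  [/\ f 0 = 0, forall u v, f (u + v) = f u + f v & forall a u, f (a *: u) = a * f u].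
Proof.
move=> f_lin; have f0 : f 0 = 0.
  have := f_lin 1 0 0; rewrite scale1r addr0 mul1r => f00.
  by apply: (addrI (f 0)); rewrite -f00 addr0.
split=> // [u v|a u]; first by rewrite -{1}[u]scale1r f_lin mul1r.
by rewrite -[a *: u]addr0 f_lin f0 addr0.
Qed.

Section VanishingOnBasis.
Variables (K : fieldType) (vT : vectType K) (n : nat) (X : n.-tuple vT).
Hypothesis X_basis : basis_of fullv X.

Lemma linear_eq0_on_basis (f : vT -> K) :
  (forall a u v, f (a *: u + v) = a * f u + f v) ->
  (forall u, u \in X -> f u = 0) -> forall v, f v = 0.
Proof.
move=> f_lin fX v; have [f0 fD fZ] := linear_0DZ f_lin.
have vX : v \in <<X>>%VS by rewrite (span_basis X_basis) memvf.
rewrite (coord_span vX) (big_morph f fD f0) big1 // => i _.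
by rewrite fZ fX ?mulr0 // mem_nth ?size_tuple.
Qed.

Lemma bilinear_eq0_on_basis (B : vT -> vT -> K) :
  (forall a u u' v, B (a *: u + u') v = a * B u v + B u' v) ->
  (forall a u v v', B u (a *: v + v') = a * B u v + B u v') ->
  (forall u v, u \in X -> v \in X -> B u v = 0) -> forall u v, B u v = 0.
Proof.
move=> linl linr BX u v; move: u; apply: linear_eq0_on_basis => [a u u'|u uX].
  exact: linl.
by move: v; apply: linear_eq0_on_basis => [a w w'|w wX]; [apply: linr | apply: BX].
Qed.

End VanishingOnBasis.

Lemma curvature_like_pair_sym (R : realType) (T : tensor4 R) :
  curvature_like T -> forall x y z w, T x y z w = T z w x y.
Proof.
case=> skew1 skew2 bianchi x y z w.
have := bianchi x y z w; have := bianchi y z w x.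
have := bianchi z w x y; have := bianchi w x y z.
move: (skew1 y z x w) (skew1 z x y w) (skew1 y z w x) (skew1 z w y x) (skew1 w y z x).
move: (skew1 w x z y) (skew1 x z w y) (skew1 w x y z) (skew1 x y w z) (skew1 y w x z).
move: (skew2 y z x w) (skew2 z x y w) (skew2 y z w x) (skew2 z w y x) (skew2 w y z x).
move: (skew2 w x z y) (skew2 x z w y) (skew2 w x y z) (skew2 x y w z) (skew2 y w x z).
move: (skew1 z y x w) (skew1 x z y w) (skew1 x w y z) (skew1 x w z y) (skew1 y w z x).
move: (skew1 w z x y) (skew2 x y z w) (skew2 z w x y) (skew2 y x z w) (skew2 w z x y).
move: (skew1 x y z w) (skew1 z w x y).
lra.
Qed.

Section Bilinear.
Variable R : realType.
Implicit Types (G : 'M[R]_5) (e : 'rV[R]_5) (x y z : vec R).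

Lemma bilDl G x y z : bil G (x + y) z = bil G x z + bil G y z.
Proof. by rewrite /bil linearD /= !mulmxDl mxE. Qed.

Lemma bilZl G a x y : bil G (a *: x) y = a * bil G x y.
Proof. by rewrite /bil linearZ /= -!scalemxAl mxE. Qed.

Lemma bilDr G x y z : bil G x (y + z) = bil G x y + bil G x z.
Proof. by rewrite /bil !mulmxDr mxE. Qed.

Lemma bilZr G a x y : bil G x (a *: y) = a * bil G x y.
Proof. by rewrite /bil -!scalemxAr mxE. Qed.

Lemma bilNl G x y : bil G (- x) y = - bil G x y.
Proof. by rewrite -scaleN1r bilZl mulN1r. Qed.

Lemma bilNr G x y : bil G x (- y) = - bil G x y.
Proof. by rewrite -scaleN1r bilZr mulN1r. Qed.

Lemma bil0l G x : bil G 0 x = 0.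
Proof. by rewrite /bil linear0 !mul0mx mxE. Qed.

Lemma formD e x y : Defs.form e (x + y) = Defs.form e x + Defs.form e y.
Proof. by rewrite /Defs.form mulmxDr mxE. Qed.

Lemma formZ e a x : Defs.form e (a *: x) = a * Defs.form e x.
Proof. by rewrite /Defs.form -scalemxAr mxE. Qed.

Lemma bil_suml G n (k : 'I_n -> R) (X : 'I_n -> vec R) y :
  bil G (\sum_i k i *: X i) y = \sum_i k i * bil G (X i) y.
Proof.
rewrite (big_morph (bil G ^~ y) (fun x z => bilDl G x z y) (bil0l G y)).
by apply: eq_bigr => i _; rewrite bilZl.
Qed.

Lemma free_orthogonal n (X : n.-tuple (vec R)) G :
  (forall x y, bil G x y = bil G y x) ->
  (forall i j, (i < j < n)%N -> bil G X`_i X`_j = 0) ->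
  (forall i, (i < n)%N -> bil G X`_i X`_i != 0) -> free X.
Proof.
move=> sym orth nonnull; apply/freeP => k sum0 i.
have := congr1 (bil G ^~ X`_i) sum0; rewrite /= bil_suml bil0l (bigD1 i) //=.
rewrite big1 ?addr0 => [/eqP|j ji]; last first.
  have [ltji|leij] := ltnP j i; first by rewrite orth ?mulr0 // ltji ltn_ord.
  rewrite sym orth ?mulr0 // ltn_ord andbT ltn_neqAle leij andbT.
  by rewrite eq_sym.
by rewrite mulf_eq0 (negbTE (nonnull _ (ltn_ord i))) orbF => /eqP.
Qed.

Lemma exists_orthogonal3 G a b c :
  exists2 w : vec R, w != 0 & [/\ bil G a w = 0, bil G b w = 0 & bil G c w = 0].
Proof.
pose A := col_mx (a^T *m G) (col_mx (b^T *m G) (c^T *m G)).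
have : kermx A^T != 0.
  by rewrite -mxrank_eq0 mxrank_ker mxrank_tr -lt0n; have := rank_leq_row A; lia.
case/rowV0Pn => r /sub_kermxP rA r0.
have : A *m r^T = 0 by rewrite -[A]trmxK -trmx_mul rA trmx0.
rewrite !mul_col_mx => /eqP; rewrite !col_mx_eq0 => /and3P [/eqP ha /eqP hb /eqP hc].
by exists r^T; rewrite ?trmx_eq0 // /bil ha hb hc !mxE.
Qed.

End Bilinear.

Section AlmostContactBMetric.
Variables (R : realType) (F : 'M[R]_5) (xi : vec R) (e : 'rV[R]_5) (G : 'M[R]_5).
Hypothesis acB : acBmetric F xi e G.
Local Notation g := (bil G).
Local Notation eta := (Defs.form e).
Implicit Types (x y u v : vec R).

Lemma F_xi : F *m xi = 0.
Proof. by case: acB => [[]]. Qed.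

Lemma FF v : F *m (F *m v) = - v + eta v *: xi.
Proof.
case: acB => [[_ FF_eq _ _] _]; rewrite mulmxA FF_eq mulmxDl mulNmx mul1mx.
by rewrite -mulmxA [e *m v]mx11_scalar mul_mx_scalar.
Qed.

Lemma eta_F v : eta (F *m v) = 0.
Proof. by case: acB => [[_ _ eF _] _]; rewrite /Defs.form mulmxA eF mul0mx mxE. Qed.

Lemma eta_xi : eta xi = 1.
Proof. by case: acB => [[]]. Qed.

Lemma g_sym x y : g x y = g y x.
Proof.
case: acB => [_ [GT _ _]]; rewrite /bil.
transitivity ((x^T *m G *m y)^T 0 0); first by rewrite [RHS]mxE.
by rewrite !trmx_mul trmxK GT mulmxA.
Qed.

Lemma g_FF x y : g (F *m x) (F *m y) = - g x y + eta x * eta y.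
Proof. by case: acB => [_ [_ _ compat]]; rewrite (compat x y); ring. Qed.

Lemma g_xi x : g x xi = eta x.
Proof.
case: acB => [_ [_ _ compat]].
by rewrite compat F_xi /bil mulmx0 mxE eta_xi; ring.
Qed.

Lemma g_Fl x y : g (F *m x) y = g x (F *m y).
Proof.
case: acB => [_ [_ _ compat]].
by rewrite (compat x (F *m y)) FF bilDr bilZr g_xi !eta_F -scaleN1r bilZr; ring.
Qed.

Lemma g_Fsym x y : g x (F *m y) = g y (F *m x).
Proof. by rewrite -g_Fl g_sym. Qed.

Lemma g_FFr x y : g x (F *m (F *m y)) = - g x y + eta x * eta y.
Proof. by rewrite -g_Fl g_FF. Qed.

Definition totally_real_pair x y :=
  [/\ eta x = 0, eta y = 0, g x (F *m x) = 0, g y (F *m y) = 0 & g x (F *m y) = 0].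

Definition phi_frame x y : 5.-tuple (vec R) := [tuple x; F *m x; y; F *m y; xi].

Lemma phi_frame_basis x y : totally_real_pair x y ->
  g x y = 0 -> g x x != 0 -> g y y != 0 -> basis_of fullv (phi_frame x y).
Proof.
move=> [ex ey gxFx gyFy gxFy] gxy nx ny.
rewrite basisEfree subvf dimvf andbT /=.
apply: (free_orthogonal (X := phi_frame x y) g_sym).
  move=> [|[|[|[|[|i]]]]] [|[|[|[|[|j]]]]];
  rewrite ?ltnS ?ltn0 ?andbF ?andFb //= => _;
  by rewrite ?g_FF ?g_xi ?g_Fl ?eta_F ?ex ?ey ?gxFx ?gyFy ?gxFy ?gxy; ring.
move=> [|[|[|[|[|i]]]]] //= _; rewrite ?g_FF ?g_xi ?eta_xi ?ex ?ey ?mulr0 ?addr0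
  ?oppr_eq0 ?oner_eq0 //.
Qed.

Lemma G_unit : G \in unitmx.
Proof.
case: acB => _ [_ [P _ PGP] _].
have : P^T *m G *m P \in unitmx.
  rewrite PGP unitmxE det_diag !big_ord_recl big_ord0 !mxE /=.
  by rewrite !mulN1r !mul1r opprK unitr1.
by rewrite !unitmx_mul => /andP [/andP [_ ->]].
Qed.

Lemma g_nondegenerate u : u != 0 -> exists v, g u v != 0.
Proof.
move=> u_neq0; have : u^T *m G != 0.
  apply: contraNneq u_neq0 => uG.
  by rewrite -trmx_eq0 -(mulmxK G_unit u^T) uG mul0mx.
case/matrix0Pn => i [j uGj]; exists (delta_mx j 0).
by rewrite /bil -colE mxE -(ord1 i).
Qed.

Lemma exists_g_eqN1 : exists p, g p p = -1.
Proof.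
case: acB => _ [_ [P _ PGP] _]; exists (col 0 P).
by rewrite /bil tr_col -row_mul colE mulmxA -colE -row_mul PGP !mxE /= mulr1n.
Qed.

(* With h = g u u and k = g u (F u), the vector v = u + b F u has
   g v v + i g v (F v) = (h + i k) (1 - i b)^2, so b can make the second
   component vanish while the first stays nonzero. *)
Lemma rotate_totally_real u : eta u = 0 -> g u u != 0 ->
  exists b : R, g (u + b *: (F *m u)) (u + b *: (F *m u)) != 0 /\
    g (u + b *: (F *m u)) (F *m (u + b *: (F *m u))) = 0.
Proof.
move=> eu nu; set h := g u u; set k := g u (F *m u).
have gvv b : g (u + b *: (F *m u)) (u + b *: (F *m u)) = h + 2 * b * k - b ^+ 2 * h.
  by rewrite !bilDl !bilDr !bilZl !bilZr g_FF g_Fl eu -/h -/k; ring.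
have gvFv b : g (u + b *: (F *m u)) (F *m (u + b *: (F *m u))) =
    k - 2 * b * h - b ^+ 2 * k.
  rewrite mulmxDr -scalemxAr !bilDl !bilDr !bilZl !bilZr !g_FFr g_FF g_Fl ?eta_F eu.
  by rewrite -/h -/k; ring.
have norm_id b : (h + 2 * b * k - b ^+ 2 * h) ^+ 2 + (k - 2 * b * h - b ^+ 2 * k) ^+ 2
    = (h ^+ 2 + k ^+ 2) * (1 + b ^+ 2) ^+ 2 by ring.
suff [b gvFv0] : exists b, k - 2 * b * h - b ^+ 2 * k = 0.
  exists b; rewrite gvv gvFv; split=> //; apply/eqP => gvv0.
  have := norm_id b; rewrite gvv0 gvFv0 expr0n addr0 /= => /esym /eqP.
  rewrite mulf_eq0 !expf_eq0 /= paddr_eq0 ?sqr_ge0 // sqrf_eq0 (negbTE nu) /=.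
  by apply/negP; rewrite gt_eqF // ltr_pwDl ?sqr_ge0.
have [k0|k_neq0] := eqVneq k 0; first by exists 0; rewrite k0; ring.
pose r := Num.sqrt (h ^+ 2 + k ^+ 2).
have r2 : r ^+ 2 = h ^+ 2 + k ^+ 2 by rewrite sqr_sqrtr // addr_ge0 // sqr_ge0.
exists ((r - h) / k); apply: (mulfI k_neq0); rewrite mulr0.
have kb : k * ((r - h) / k) = r - h by rewrite mulrC divfK.
transitivity (k ^+ 2 - 2 * h * (k * ((r - h) / k)) - (k * ((r - h) / k)) ^+ 2).
  by ring.
by rewrite kb; transitivity (h ^+ 2 + k ^+ 2 - r ^+ 2); [ring | rewrite r2 subrr].
Qed.

Lemma nonnull_of_polar u v : g u v != 0 ->
  [\/ g u u != 0, g v v != 0 | g (u + v) (u + v) != 0].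
Proof.
move=> nuv; have [uu0|] := eqVneq (g u u) 0; last by constructor 1.
have [vv0|] := eqVneq (g v v) 0; last by constructor 2.
constructor 3; rewrite !bilDl !bilDr uu0 vv0 (g_sym v u) add0r addr0.
by rewrite -mulr2n mulrn_eq0 negb_or nuv.
Qed.

Lemma exists_nonnull_orthogonal p : eta p = 0 -> g p p != 0 ->
  g p (F *m p) = 0 ->
  exists q, [/\ g q p = 0, g q (F *m p) = 0, g q xi = 0 & g q q != 0].
Proof.
move=> ep np pFp.
have [w w_neq0 [pw Fpw xiw]] := exists_orthogonal3 G p (F *m p) xi.
rewrite g_sym in pw; rewrite g_sym in Fpw; rewrite g_sym in xiw.
have [v wv] := g_nondegenerate w_neq0.
have nFp : g (F *m p) (F *m p) != 0 by rewrite g_FF ep mulr0 addr0 oppr_eq0.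
pose v' := v - (g v p / g p p) *: p
  - (g v (F *m p) / g (F *m p) (F *m p)) *: (F *m p) - eta v *: xi.
have Fpp : g (F *m p) p = 0 by rewrite g_Fl.
have xip : g xi p = 0 by rewrite g_sym g_xi.
have xiFp : g xi (F *m p) = 0 by rewrite g_sym g_xi eta_F.
have [v'p v'Fp v'xi] : [/\ g v' p = 0, g v' (F *m p) = 0 & g v' xi = 0].
  split; rewrite /v' !bilDl !bilNl !bilZl ?Fpp ?xip ?xiFp ?pFp ?g_xi ?eta_F ?ep
    ?eta_xi ?divfK //; ring.
have wv' : g w v' != 0.
  by rewrite /v' !bilDr !bilNr !bilZr Fpw pw xiw !mulr0 !subr0.
clearbody v'.
have [ww|v'v'|wv'wv'] := nonnull_of_polar wv'; first by exists w.
  by exists v'.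
by exists (w + v'); split; rewrite // bilDl ?pw ?v'p ?Fpw ?v'Fp ?xiw ?v'xi addr0.
Qed.

Lemma exists_orthogonal_totally_real_pair : exists p q,
  [/\ totally_real_pair p q, g p q = 0, g p p != 0 & g q q != 0].
Proof.
have [p1 p1p1] := exists_g_eqN1.
pose p0 := p1 - eta p1 *: xi.
have ep0 : eta p0 = 0 by rewrite /p0 formD -scaleN1r !formZ eta_xi; ring.
have np0 : g p0 p0 != 0.
  rewrite /p0 !bilDl !bilDr -!scaleN1r !bilZl !bilZr p1p1 (g_sym xi p1) !g_xi eta_xi.
  apply/eqP => h; have := sqr_ge0 (eta p1); rewrite expr2; lra.
have [b [np pFp]] := rotate_totally_real ep0 np0.
set p := p0 + b *: (F *m p0) in np pFp.
have ep : eta p = 0 by rewrite /p formD formZ eta_F ep0; ring.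
have [q0 [q0p q0Fp q0xi nq0]] := exists_nonnull_orthogonal ep np pFp.
have eq0 : eta q0 = 0 by rewrite -g_xi.
have [c [nq qFq]] := rotate_totally_real eq0 nq0.
set q := q0 + c *: (F *m q0) in nq qFq.
have eq : eta q = 0 by rewrite /q formD formZ eta_F eq0; ring.
exists p, q; split=> //; last by rewrite g_sym /q bilDl bilZl g_Fl q0p q0Fp; ring.
by split=> //; rewrite g_Fsym /q bilDl bilZl g_FF q0Fp q0p eq0 ep; ring.
Qed.

Lemma pi1_plane_neq0 (a : {vspace vec R}) x y :
  nondegenerate_plane G a -> basis_of a [:: x; y] -> pi1 G x y y x != 0.
Proof.
move=> nd xy_basis.
have xa : x \in a by apply: (basis_mem xy_basis); rewrite inE eqxx.
have ya : y \in a by apply: (basis_mem xy_basis); rewrite !inE eqxx orbT.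
have perp_xy u : u \in a -> g u x = 0 -> g u y = 0 -> u = 0.
  move=> ua ux uy; apply: nd => // v.
  rewrite -(span_basis xy_basis) span_cons span_seq1.
  case/memv_addP => _ /vlineP [c1 ->] [_ /vlineP [c2 ->] ->].
  by rewrite bilDr !bilZr ux uy; ring.
have := basis_free xy_basis; rewrite free_cons span_seq1 seq1_free => /andP [x_notin y0].
rewrite /pi1 (g_sym y x); apply/eqP => gram0.
pose u := g y y *: x - g x y *: y.
have u0 : u = 0.
  apply: perp_xy; rewrite /u ?memvB ?memvZ // bilDl bilNl !bilZl; last by ring.
  by rewrite (g_sym y x) -gram0; ring.
have [yy0|yy_neq0] := eqVneq (g y y) 0.
  have xy0 : g x y = 0.
    by apply/eqP; move/eqP: gram0; rewrite yy0 mul0r sub0r oppr_eq0 mulf_eq0 orbb.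
  by move/eqP: y0; apply; apply: perp_xy; rewrite // (g_sym y x).
move/negP: x_notin; apply; apply/vlineP; exists (g x y / g y y).
apply: (scalerI yy_neq0); rewrite scalerA mulrCA divff // mulr1.
by apply/eqP; rewrite -subr_eq0; apply/eqP.
Qed.

Lemma alternating_form_eq0 (B : vec R -> vec R -> R) x y :
  basis_of fullv (phi_frame x y) ->
  (forall a u u' v, B (a *: u + u') v = a * B u v + B u' v) ->
  (forall a u v v', B u (a *: v + v') = a * B u v + B u v') ->
  (forall u v, B u v = - B v u) ->
  (forall u v, B (F *m u) v = B u (F *m v)) ->
  (forall v, B xi v = 0) ->
  B x y = 0 -> B x (F *m y) = 0 -> forall u v, B u v = 0.
Proof.
move=> frame linl linr skew BF Bxi Bxy BxFy.
have Bxi_r u : B u xi = 0 by rewrite skew Bxi oppr0.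
have Buu u : B u u = 0 by have := skew u u; lra.
have BuFu u : B u (F *m u) = 0 by have := BF u u; rewrite skew; lra.
have BFxy : B (F *m x) y = 0 by rewrite BF.
have BFxFy : B (F *m x) (F *m y) = 0.
  have [_ BxD BxZ] := linear_0DZ (fun a v v' => linr a x v v').
  by rewrite BF FF -scaleN1r BxD !BxZ Bxi_r Bxy; ring.
apply: (bilinear_eq0_on_basis frame) => // u v.
rewrite !inE => /or4P [| | |/orP []] /eqP -> /or4P [| | |/orP []] /eqP ->;
by rewrite ?Buu ?BuFu ?Bxi ?Bxi_r ?Bxy ?BxFy ?BFxy ?BFxFy // skew
  ?Buu ?BuFu ?Bxi ?Bxi_r ?Bxy ?BxFy ?BFxy ?BFxFy ?oppr0.
Qed.

Definition phi_Kaehler_tensor (T : tensor4 R) := multilinear4 T /\ phi_Kaehler_type F T.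

Section PhiKaehlerTensor.
Variable T : tensor4 R.
Hypothesis T_phiK : phi_Kaehler_tensor T.

Let T_lin : multilinear4 T := T_phiK.1.
Let T_curv : curvature_like T := T_phiK.2.1.

Lemma phiK_xi4 x y z : T x y z xi = 0.
Proof.
case: T_phiK => [[_ _ _ lin4] [_ TFF]].
have [T0 _ _] := linear_0DZ (fun a w w' => lin4 a x y (F *m z) w w').
by have := TFF x y z xi; rewrite F_xi T0; lra.
Qed.

Lemma phiK_xi3 x y w : T x y xi w = 0.
Proof. by case: T_curv => _ skew2 _; rewrite skew2 phiK_xi4 oppr0. Qed.

Lemma phiK_xi1 y z w : T xi y z w = 0.
Proof. by rewrite curvature_like_pair_sym // phiK_xi3. Qed.

Lemma phiK_F34 x y z w : T x y (F *m z) w = T x y z (F *m w).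
Proof.
case: T_phiK => [[_ _ lin3 _] [_ TFF]].
have [_ TD TZ] := linear_0DZ (fun a z z' => lin3 a x y z z' (F *m w)).
by have := TFF x y (F *m z) w; rewrite FF TD !TZ phiK_xi3 -scaleN1r TZ; lra.
Qed.

Lemma phiK_F12 x y z w : T (F *m x) y z w = T x (F *m y) z w.
Proof. by rewrite curvature_like_pair_sym // phiK_F34 -curvature_like_pair_sym. Qed.

Lemma phiK_FF12 x y z w : T (F *m x) (F *m y) z w = - T x y z w.
Proof.
case: T_phiK => [_ [_ TFF]].
by rewrite curvature_like_pair_sym // TFF -curvature_like_pair_sym.
Qed.

Lemma phiK_Fxx x z w : T (F *m x) x z w = 0.
Proof. by case: T_curv => skew1 _ _; have := phiK_F12 x x z w; rewrite skew1; lra. Qed.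

Lemma phiK_eq0_last2 a b x y : basis_of fullv (phi_frame x y) ->
  T a b x y = 0 -> T a b x (F *m y) = 0 -> forall z w, T a b z w = 0.
Proof.
case: T_lin => _ _ lin3 lin4; case: T_curv => _ skew2 _.
move=> frame; apply: (alternating_form_eq0 frame).
- by move=> *; apply: lin3.
- by move=> *; apply: lin4.
- by move=> *; apply: skew2.
- by move=> *; apply: phiK_F34.
- by move=> *; apply: phiK_xi3.
Qed.

Lemma phiK_eq0 x y : basis_of fullv (phi_frame x y) ->
  T x y y x = 0 -> T x y y (F *m x) = 0 -> forall a b c d, T a b c d = 0.
Proof.
move=> frame Txyyx TxyyFx.
case: T_lin => lin1 lin2 _ _; case: T_curv => skew1 skew2 bianchi.
have Txy : forall z w, T x y z w = 0.
  apply: phiK_eq0_last2 frame _ _.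
    by rewrite skew2 Txyyx oppr0.
  by rewrite skew2 phiK_F34 TxyyFx oppr0.
have TxFy : forall z w, T x (F *m y) z w = 0.
  apply: phiK_eq0_last2 frame _ _; first by rewrite curvature_like_pair_sym // Txy.
  have := bianchi x (F *m y) (F *m x) y.
  by rewrite phiK_FF12 phiK_Fxx (skew1 y x) Txy -phiK_F34; lra.
move=> a b c d; move: a b; apply: (alternating_form_eq0 frame).
- by move=> *; apply: lin1.
- by move=> *; apply: lin2.
- by move=> *; apply: skew1.
- by move=> *; apply: phiK_F12.
- by move=> *; apply: phiK_xi1.
- exact: Txy.
- exact: TxFy.
Qed.

End PhiKaehlerTensor.

Lemma phi_Kaehler_tensor_lincomb a b (T T' : tensor4 R) :
  phi_Kaehler_tensor T -> phi_Kaehler_tensor T' ->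
  phi_Kaehler_tensor (fun x y z w => a * T x y z w + b * T' x y z w).
Proof.
move=> [[t1 t2 t3 t4] [[t5 t6 t7] t8]] [[u1 u2 u3 u4] [[u5 u6 u7] u8]].
split; [split|split; [split|]].
- by move=> *; rewrite t1 u1; ring.
- by move=> *; rewrite t2 u2; ring.
- by move=> *; rewrite t3 u3; ring.
- by move=> *; rewrite t4 u4; ring.
- by move=> *; rewrite t5 u5; ring.
- by move=> *; rewrite t6 u6; ring.
- move=> x y z w; transitivity (a * (T x y z w + T y z x w + T z x y w)
    + b * (T' x y z w + T' y z x w + T' z x y w)); first by ring.
  by rewrite t7 u7; ring.
- by move=> *; rewrite t8 u8; ring.
Qed.

Ltac expand_bilinear :=
  rewrite ?mulmxDr -?scalemxAr ?bilDl ?bilDr ?bilZl ?bilZr ?formD ?formZ.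

Lemma L1_phi_Kaehler : phi_Kaehler_tensor (L1 F e G).
Proof.
rewrite /L1 /pi1 /pi2 /pi4; split; [split|split; [split|]].
- by move=> *; expand_bilinear; ring.
- by move=> *; expand_bilinear; ring.
- by move=> *; expand_bilinear; ring.
- by move=> *; expand_bilinear; ring.
- by move=> *; ring.
- by move=> *; ring.
- move=> x y z w; rewrite (g_sym z x) (g_sym y x) (g_sym z y).
  by rewrite (g_Fsym z x) (g_Fsym y x) (g_Fsym z y); ring.
- by move=> *; rewrite !g_FFr !eta_F; ring.
Qed.

Lemma L2_phi_Kaehler : phi_Kaehler_tensor (L2 F e G).
Proof.
rewrite /L2 /pi3 /pi5; split; [split|split; [split|]].
- by move=> *; expand_bilinear; ring.
- by move=> *; expand_bilinear; ring.
- by move=> *; expand_bilinear; ring.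
- by move=> *; expand_bilinear; ring.
- by move=> *; ring.
- by move=> *; ring.
- move=> x y z w; rewrite (g_sym z x) (g_sym y x) (g_sym z y).
  by rewrite (g_Fsym z x) (g_Fsym y x) (g_Fsym z y); ring.
- by move=> *; rewrite !g_FFr !eta_F; ring.
Qed.

Lemma L1_L2_totally_real x y : totally_real_pair x y ->
  [/\ L1 F e G x y y x = pi1 G x y y x, L2 F e G x y y x = 0,
      L1 F e G x y y (F *m x) = 0 & L2 F e G x y y (F *m x) = pi1 G x y y x].
Proof.
move=> [ex ey gxFx gyFy gxFy]; have gyFx : g y (F *m x) = 0 by rewrite -g_Fsym.
by split; rewrite /L1 /L2 /pi1 /pi2 /pi3 /pi4 /pi5 ?g_FFr ?eta_F ?ex ?ey
  ?gxFx ?gyFy ?gxFy ?gyFx; ring.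
Qed.

Lemma phi_Kaehler_decomposition T p q :
  phi_Kaehler_tensor T -> totally_real_pair p q ->
  g p q = 0 -> g p p != 0 -> g q q != 0 ->
  let nu := T p q q p / pi1 G p q q p in
  let nustar := T p q q (F *m p) / pi1 G p q q p in
  forall x y z w, T x y z w = nu * L1 F e G x y z w + nustar * L2 F e G x y z w.
Proof.
move=> T_phiK pq gpq np nq nu nustar x y z w.
have pi1_neq0 : pi1 G p q q p != 0.
  by rewrite /pi1 gpq (g_sym q p) gpq mulr0 subr0 mulf_neq0.
have [L1pq L2pq L1Fpq L2Fpq] := L1_L2_totally_real pq.
have Tdiff := phiK_eq0 (phi_Kaehler_tensor_lincomb 1 (-1) T_phiK
  (phi_Kaehler_tensor_lincomb nu nustar L1_phi_Kaehler L2_phi_Kaehler))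
  (phi_frame_basis pq gpq np nq).
apply/eqP; rewrite -subr_eq0 -mulN1r -[T x y z w]mul1r; apply/eqP.
apply: (Tdiff _ _ x y z w).
  by rewrite L1pq L2pq /nu mulr0 addr0 divfK // mulN1r mul1r subrr.
by rewrite L1Fpq L2Fpq /nustar mulr0 add0r divfK // mulN1r mul1r subrr.
Qed.

End AlmostContactBMetric.

Theorem corollary3p4 (R : realType) (F : 'M[R]_5) (xi : 'cV[R]_5)
  (e : 'rV[R]_5) (G : 'M[R]_5) (K : tensor4 R) :
  acBmetric F xi e G ->
  multilinear4 K ->
  phi_Kaehler_type F K ->
  exists nu nustar : R,
    (forall x y z w,
        K x y z w = nu * L1 F e G x y z w + nustar * L2 F e G x y z w) /\
    (forall (a : {vspace 'cV[R]_5}) (x y : 'cV[R]_5),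
        \dim a = 2%N ->
        nondegenerate_plane G a -> totally_real_plane F G a ->
        orth_xi_plane xi G a ->
        basis_of a [:: x; y] ->
        sec_k G K x y = nu /\ sec_kstar F G K x y = nustar).
Proof.
move=> acB K_lin K_phiK.
have [p [q [pq gpq np nq]]] := exists_orthogonal_totally_real_pair acB.
have K_eq := phi_Kaehler_decomposition acB (conj K_lin K_phiK) pq gpq np nq.
do 2 eexists; split; first exact: K_eq.
move=> a x y _ a_nondeg a_real a_perp xy_basis.
have xa : x \in a by apply: (basis_mem xy_basis); rewrite inE eqxx.
have ya : y \in a by apply: (basis_mem xy_basis); rewrite !inE eqxx orbT.
have xy : totally_real_pair F e G x y.
  by split; rewrite ?a_real // -(g_xi acB) a_perp.
have [L1xy L2xy L1Fxy L2Fxy] := L1_L2_totally_real acB xy.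
have pi1_neq0 := pi1_plane_neq0 acB a_nondeg xy_basis.
rewrite /sec_k /sec_kstar (K_eq x y y x) (K_eq x y y (F *m x)) L1xy L2xy L1Fxy L2Fxy.
by split; rewrite ?mulr0 ?addr0 ?add0r mulfK.
Qed.
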